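(* For $t\in\mathbb R$ and $T>1$ let $K_T(t)=\{k\in K:a_tk\in HKA^+_{\log T}\}$. Then: (1) for all $0\le t<\log T$, $e\in K_T(t)$; (2) for all $t>\log T$, $K_T(t)=\emptyset$; (3) for any $\epsilon>0$ there exists $T_0(\epsilon)\ge1$ such that $K_T(t)\subset K_\epsilon M$ for all $t>T_0(\epsilon)$.
   Context: $G=\mathrm{PSL}_2(\mathbb C)$, $K=\mathrm{PSU}(2)$, $a_t=\mathrm{diag}(e^{t/2},e^{-t/2})$, $A^+_s=\{a_t:0\le t\le s\}$, $M=\{\mathrm{diag}(e^{i\theta},e^{-i\theta})\}$, $H$ the stabilizer in $G$ of the unit circle centered at $0$. With a fixed left-invariant metric on $G$, $U_\epsilon$ is the $\epsilon$-ball around $e$ and $K_\epsilon=K\cap U_\epsilon$. *)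

From HB Require Import structures.
From mathcomp Require Import all_boot all_order all_algebra.
From mathcomp Require Import reals.
From mathcomp Require Import sequences.
From mathcomp.analysis Require Import exp.
From mathcomp Require Import classical_sets.
From mathcomp Require Import complex.
Set Implicit Arguments. Unset Strict Implicit. Unset Printing Implicit Defensive.
Import Order.TTheory GRing.Theory Num.Theory.
Local Open Scope ring_scope.

Section PSL2C.
Variable R : realType.
Local Notation C := R[i].
Local Notation M2 := 'M[C]_2.

Definition mx2 (a b c d : C) : M2 :=
  \matrix_(i < 2, j < 2)
    if (i : nat) == 0%N then (if (j : nat) == 0%N then a else b)
    else (if (j : nat) == 0%N then c else d).

Definition i0 : 'I_2 := ord0.
Definition i1 : 'I_2 := ord_max.

(** G = PSL_2(C) is represented through its preimage SL_2(C); every subset of G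
    below is represented by its (sign-saturated) preimage in SL_2(C). *)
Definition SL2 (g : M2) : Prop := \det g = 1.

Definition adjC (g : M2) : M2 := map_mx (@conjc R) g^T.

Definition Kset (k : M2) : Prop := SL2 k /\ adjC k *m k = 1%:M.

Definition a_ (t : R) : M2 := mx2 ((expR (t / 2))%:C)%C 0 0 ((expR (- t / 2))%:C)%C.

Definition Aplus (s : R) (g : M2) : Prop := exists r : R, 0 <= r <= s /\ g = a_ r.

Definition Mset (g : M2) : Prop := exists z : C, `|z| = 1 /\ g = mx2 z 0 0 z^-1.

Definition unit_circle (z : C) : Prop := `|z| = 1.

(** g = [[a,b],[c,d]] maps the unit circle S onto itself under the Moebius action
    z |-> (a z + b)/(c z + d) on the Riemann sphere: no point of S is sent to
    infinity, g(S) is contained in S, and S is contained in g(S). *)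
Definition stabilizes_unit_circle (g : M2) : Prop :=
  let a := g i0 i0 in let b := g i0 i1 in let c := g i1 i0 in let d := g i1 i1 in
  (forall z, unit_circle z -> c * z + d != 0 /\ unit_circle ((a * z + b) / (c * z + d)))
  /\ (forall w, unit_circle w -> exists z, unit_circle z /\ (a * z + b) / (c * z + d) = w).

Definition Hset (g : M2) : Prop := SL2 g /\ stabilizes_unit_circle g.

Definition HKAplus (s : R) (g : M2) : Prop :=
  exists h k a, Hset h /\ Kset k /\ Aplus s a /\ g = h *m k *m a.

Definition K_T (T t : R) (k : M2) : Prop := Kset k /\ HKAplus (ln T) (a_ t *m k).

(** entrywise norm on 2x2 complex matrices (defines the usual topology) *)
Definition mxnorm (g : M2) : R := \sum_(i < 2) \sum_(j < 2) Normc.normc (g i j).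

(** A left-invariant metric on G = PSL_2(C) compatible with its Lie group topology,
    given as a function on SL_2(C) that is invariant under g |-> -g. *)
Definition left_inv_metric (dist : M2 -> M2 -> R) : Prop :=
  (forall g h, SL2 g -> SL2 h -> 0 <= dist g h) /\
  (forall g h, SL2 g -> SL2 h -> dist g h = dist h g) /\
      (forall g h, SL2 g -> SL2 h -> dist g h = dist g (- h)) /\
      (forall g h, SL2 g -> SL2 h -> (dist g h = 0 <-> (g = h \/ g = - h))) /\
      (forall g h l, SL2 g -> SL2 h -> SL2 l -> dist g l <= dist g h + dist h l) /\
      (forall x g h, SL2 x -> SL2 g -> SL2 h -> dist (x *m g) (x *m h) = dist g h) /\
      (forall eps, 0 < eps -> exists2 del, 0 < del &
          forall g, SL2 g -> mxnorm (g - 1%:M) < del -> dist 1%:M g < eps) /\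
    (forall del, 0 < del -> exists2 eps, 0 < eps &
          forall g, SL2 g -> dist 1%:M g < eps ->
             mxnorm (g - 1%:M) < del \/ mxnorm (g + 1%:M) < del).

Definition K_eps (dist : M2 -> M2 -> R) (eps : R) (k : M2) : Prop :=
  Kset k /\ dist 1%:M k < eps.

Definition K_eps_M (dist : M2 -> M2 -> R) (eps : R) (g : M2) : Prop :=
  exists k m, K_eps dist eps k /\ Mset m /\ g = k *m m.

End PSL2C.

From HB Require Import structures.
From mathcomp Require Import all_boot all_order all_algebra.
From mathcomp Require Import reals.
From mathcomp Require Import sequences.
From mathcomp.analysis Require Import exp.
From mathcomp Require Import classical_sets.
From mathcomp Require Import complex.
From mathcomp Require Import ring lra.
Import Order.TTheory GRing.Theory Num.Theory.
Local Open Scope ring_scope.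
Local Open Scope complex_scope.

(* The Hermitian form Q(x, y) = |x|^2 - |y|^2 is preserved up to sign by the
   stabilizer H of the unit circle and multiplied by e^r, resp. e^-r, on the
   first, resp. second, column by right multiplication with a_r; on the columns of
   k = [[al, be], [-be^*, al^*]] in SU(2) it takes the values
   +-(|al|^2 - |be|^2), which lie in [-1, 1].  Evaluating Q on the columns of
   a_t k = h k' a_r therefore gives, for some |s| <= 1,
     e^t |al|^2 - e^-t |be|^2 = s e^r   and   e^t |be|^2 - e^-t |al|^2 = - s e^-r.
   Adding them gives sinh t <= sinh r, hence t <= r <= log T.  The second one
   gives |be|^2 <= 2 e^-t, so for large t the element k is an element of SU(2)
   close to the identity times a diagonal element of M. *)

Section HKA_decomposition.
Variable R : realType.
Local Notation C := R[i].
Local Notation M2 := 'M[C]_2.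

Lemma ord2_cases (i : 'I_2) : i = i0 \/ i = i1.
Proof. by case: i => [[|[|//]]] ?; [left|right]; apply: val_inj. Qed.

Lemma sum_ord2 (V : nmodType) (F : 'I_2 -> V) : \sum_(i < 2) F i = F i0 + F i1.
Proof. by rewrite big_ord_recr big_ord1; congr (F _ + F _); apply: val_inj. Qed.

Lemma mx2_eta (g : M2) : g = mx2 (g i0 i0) (g i0 i1) (g i1 i0) (g i1 i1).
Proof.
apply/matrixP => i j; rewrite mxE.
by case: (ord2_cases i) => ->; case: (ord2_cases j) => ->.
Qed.

Lemma mx2_inj (a b c d a' b' c' d' : C) :
  mx2 a b c d = mx2 a' b' c' d' -> [/\ a = a', b = b', c = c' & d = d'].
Proof.
move=> E; have E' i j : mx2 a b c d i j = mx2 a' b' c' d' i j by rewrite E.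
by move: (E' i0 i0) (E' i0 i1) (E' i1 i0) (E' i1 i1); rewrite !mxE.
Qed.

Lemma mulmx2E (g h : M2) i j : (g *m h) i j = g i i0 * h i0 j + g i i1 * h i1 j.
Proof. by rewrite mxE sum_ord2. Qed.

Lemma mul_mx2 (a b c d a' b' c' d' : C) :
  mx2 a b c d *m mx2 a' b' c' d' =
  mx2 (a * a' + b * c') (a * b' + b * d') (c * a' + d * c') (c * b' + d * d').
Proof. by rewrite [LHS]mx2_eta; congr mx2; rewrite mulmx2E !mxE. Qed.

Lemma adjC_mx2 (a b c d : C) : adjC (mx2 a b c d) = mx2 a^*%C c^*%C b^*%C d^*%C.
Proof. by rewrite [LHS]mx2_eta /adjC !mxE. Qed.

Lemma det_mx2 (a b c d : C) : \det (mx2 a b c d) = a * d - b * c.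
Proof.
rewrite (expand_det_row _ i0) sum_ord2 /cofactor !det_mx11 !mxE /=.
by rewrite expr0 expr1 !mul1r mulN1r mulrN.
Qed.

Lemma mx2_1 : (1%:M : M2) = mx2 1 0 0 1.
Proof. by rewrite [LHS]mx2_eta !mxE. Qed.

Lemma conjcN (x : C) : (- x)^*%C = - x^*%C.
Proof. by case: x. Qed.

Lemma conjcM (x y : C) : (x * y)^*%C = x^*%C * y^*%C.
Proof.
by case: x => ? ?; case: y => ? ?; apply/eqP; rewrite eq_complex /=; apply/andP; split; apply/eqP; ring.
Qed.

Definition sqnorm (z : C) : R := let: a +i* b := z in a ^+ 2 + b ^+ 2.

Lemma sqnorm_ge0 z : 0 <= sqnorm z.
Proof. by case: z => a b /=; nra. Qed.

Lemma sqnormM x y : sqnorm (x * y) = sqnorm x * sqnorm y.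
Proof. by case: x => a b; case: y => c d /=; ring. Qed.

Lemma sqnormN x : sqnorm (- x) = sqnorm x.
Proof. by case: x => a b /=; ring. Qed.

Lemma sqnormJ x : sqnorm x^*%C = sqnorm x.
Proof. by case: x => a b /=; ring. Qed.

Lemma sqnorm_real (r : R) : sqnorm r%:C = r ^+ 2.
Proof. by rewrite /= expr0n addr0. Qed.

Lemma sqnorm1 : sqnorm 1 = 1.
Proof. by rewrite /= expr0n addr0 expr1n. Qed.

Lemma sqnorm_mulJ x : (sqnorm x)%:C = x * x^*%C.
Proof. by case: x => a b; apply/eqP; rewrite eq_complex /=; apply/andP; split; apply/eqP; ring. Qed.

Lemma sqnorm_norm x : (sqnorm x)%:C = `|x| ^+ 2.
Proof. by rewrite -add_Re2_Im2; case: x. Qed.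

Lemma normc_sqnorm x : Normc.normc x = Num.sqrt (sqnorm x).
Proof. by case: x. Qed.

Lemma norm_eq1_sqnorm x : (`|x| = 1) <-> (sqnorm x = 1).
Proof.
split=> [x1|s1]; first by apply: complexI; rewrite sqnorm_norm x1 expr1n.
by apply/eqP; rewrite -sqrp_eq1 // -sqnorm_norm s1.
Qed.

Lemma sqnorm_combB (a b c d x y : C) :
  sqnorm (a * x + b * y) - sqnorm (c * x + d * y) =
  (sqnorm a - sqnorm c) * sqnorm x + (sqnorm b - sqnorm d) * sqnorm y +
  2 * complex.Re ((a * b^*%C - c * d^*%C) * (x * y^*%C)).
Proof.
case: a => ? ?; case: b => ? ?; case: c => ? ?; case: d => ? ?;
case: x => ? ?; case: y => ? ? /=; ring.
Qed.

Lemma sqnorm_det (a b c d : C) :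
  (sqnorm a - sqnorm c) * (sqnorm d - sqnorm b) + sqnorm (a * b^*%C - c * d^*%C) =
  sqnorm (a * d - b * c).
Proof. by case: a => ? ?; case: b => ? ?; case: c => ? ?; case: d => ? ? /=; ring. Qed.

Lemma sqnorm_three_points (a b c d : C) :
  sqnorm (a + b) = sqnorm (c + d) -> sqnorm (- a + b) = sqnorm (- c + d) ->
  sqnorm (a * 'i + b) = sqnorm (c * 'i + d) ->
  sqnorm a + sqnorm b = sqnorm c + sqnorm d /\ a * b^*%C = c * d^*%C.
Proof.
case: a => ? ?; case: b => ? ?; case: c => ? ?; case: d => ? ? /= e1 e2 e3.
by split; [nra | apply/eqP; rewrite eq_complex /=; apply/andP; split; apply/eqP; nra].
Qed.

Definition colQ (g : M2) (j : 'I_2) : R := sqnorm (g i0 j) - sqnorm (g i1 j).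

Lemma stabilizes_unit_circle_sqnorm (h : M2) z :
  stabilizes_unit_circle h -> sqnorm z = 1 ->
  sqnorm (h i0 i0 * z + h i0 i1) = sqnorm (h i1 i0 * z + h i1 i1).
Proof.
move=> [onto _] /norm_eq1_sqnorm z1; have [_] := onto z z1.
rewrite /unit_circle normf_div => /divr1_eq E.
by apply: complexI; rewrite !sqnorm_norm E.
Qed.

Lemma Hset_colQ (h : M2) : Hset h ->
  exists2 lam : R, lam ^+ 2 = 1 & forall g j, colQ (h *m g) j = lam * colQ g j.
Proof.
case=> det1 stab.
(* Testing the circle at 1, -1 and 'i gives |a|^2 + |b|^2 = |c|^2 + |d|^2 and
   a b^* = c d^*; together with det h = 1 this forces |a|^2 - |c|^2 = +-1. *)
have e1 := stabilizes_unit_circle_sqnorm h 1 stab sqnorm1.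
have e2 := stabilizes_unit_circle_sqnorm h (-1) stab (etrans (sqnormN 1) sqnorm1).
have e3 : sqnorm (h i0 i0 * 'i + h i0 i1) = sqnorm (h i1 i0 * 'i + h i1 i1).
  by apply: stabilizes_unit_circle_sqnorm => //=; rewrite expr0n expr1n add0r.
move: det1 e1 e2 e3; rewrite /SL2 [h]mx2_eta det_mx2 !mxE /= !mulr1 !mulrN1.
set a := h i0 i0; set b := h i0 i1; set c := h i1 i0; set d := h i1 i1.
move=> det1 e1 e2 e3; have [sum_eq cross_eq] := sqnorm_three_points a b c d e1 e2 e3.
have := sqnorm_det a b c d; rewrite det1 cross_eq subrr /=.
rewrite !expr0n !expr1n !addr0 => lam2.
exists (sqnorm a - sqnorm c).
  by rewrite -lam2 expr2; congr (_ * _); lra.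
move=> g j; rewrite /colQ !mulmx2E !mxE /= sqnorm_combB cross_eq subrr mul0r.
have -> : complex.Re (0 : C) = 0 by [].
have -> : sqnorm b - sqnorm d = - (sqnorm a - sqnorm c) by lra.
ring.
Qed.

Definition su2 (al be : C) : M2 := mx2 al be (- be^*%C) al^*%C.

Lemma Kset_su2 (k : M2) : Kset k ->
  exists al be, sqnorm al + sqnorm be = 1 /\ k = su2 al be.
Proof.
rewrite [k]mx2_eta; set p := k i0 i0; set q := k i0 i1; set r := k i1 i0; set s := k i1 i1.
case; rewrite /SL2 det_mx2 adjC_mx2 mul_mx2 mx2_1 => det1 /mx2_inj [X1 X2 X3 X4].
have Hs : s = p^*%C.
  apply/eqP; rewrite -subr_eq0; apply/eqP.
  have -> : s - p^*%C = - s * ((p^*%C * p + r^*%C * r) - 1) + r * (p^*%C * q + r^*%C * s)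
     + p^*%C * ((p * s - q * r) - 1) by ring.
  by rewrite X1 X2 det1 !subrr !mulr0 !addr0.
have Hr : r = - q^*%C.
  apply/eqP; rewrite -subr_eq0 opprK; apply/eqP.
  have -> : r + q^*%C = - r * ((q^*%C * q + s^*%C * s) - 1) + s * (q^*%C * p + s^*%C * r)
     - q^*%C * ((p * s - q * r) - 1) by ring.
  by rewrite X4 X3 det1 !subrr !mulr0 !subr0 addr0.
exists p, q; split; last by rewrite /su2 Hs Hr.
apply: complexI; rewrite rmorphD rmorph1 /= !sqnorm_mulJ -X1 Hr conjcN conjcK; ring.
Qed.

Lemma su2_Kset (al be : C) : sqnorm al + sqnorm be = 1 -> Kset (su2 al be).
Proof.
move=> al_be1; have unit : al * al^*%C + be * be^*%C = 1.
  by rewrite -!sqnorm_mulJ -rmorphD al_be1.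
split; first by rewrite /SL2 det_mx2 -unit; ring.
rewrite /su2 adjC_mx2 mul_mx2 mx2_1 conjcN !conjcK.
by congr mx2; rewrite -?unit; ring.
Qed.

Lemma su2_1 : su2 1 0 = 1%:M.
Proof. by rewrite mx2_1 /su2 conjc0 conjc1 oppr0. Qed.

Lemma colQ_su2 (al be : C) :
  colQ (su2 al be) i0 = sqnorm al - sqnorm be /\ colQ (su2 al be) i1 = - colQ (su2 al be) i0.
Proof. by rewrite /colQ !mxE /= sqnormN !sqnormJ opprB. Qed.

Lemma expR_half (t : R) : expR (t / 2) ^+ 2 = expR t.
Proof. by rewrite expr2 -expRD -splitr. Qed.

Lemma colQ_a_mul (t : R) (g : M2) j :
  colQ (a_ t *m g) j = expR t * sqnorm (g i0 j) - expR (- t) * sqnorm (g i1 j).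
Proof.
by rewrite /colQ !mulmx2E !mxE /= !mul0r addr0 add0r !sqnormM !sqnorm_real !expR_half.
Qed.

Lemma colQ_mul_a (r : R) (g : M2) :
  colQ (g *m a_ r) i0 = expR r * colQ g i0 /\ colQ (g *m a_ r) i1 = expR (- r) * colQ g i1.
Proof.
rewrite /colQ !mulmx2E !mxE /= !mulr0 !addr0 !add0r !sqnormM !sqnorm_real !expR_half.
by split; ring.
Qed.

Lemma Kset1 : Kset (1%:M : M2).
Proof. by rewrite -su2_1; apply: su2_Kset; rewrite sqnorm1 /= expr0n !addr0. Qed.

Lemma Hset1 : Hset (1%:M : M2).
Proof.
split; first by rewrite /SL2 det1.
rewrite /stabilizes_unit_circle mx2_1 !mxE /=.
split=> [z z1|w w1]; last by exists w; rewrite mul0r add0r mul1r addr0 divr1.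
by rewrite mul0r add0r mul1r addr0 divr1 oner_neq0.
Qed.

Lemma K_T_form (T t : R) (k : M2) : K_T T t k ->
  exists al be r s, k = su2 al be /\
  [/\ sqnorm al + sqnorm be = 1, 0 <= r <= ln T, s ^+ 2 <= 1,
      expR t * sqnorm al - expR (- t) * sqnorm be = s * expR r &
      expR t * sqnorm be - expR (- t) * sqnorm al = - s * expR (- r)].
Proof.
move=> [/Kset_su2 [al [be [al_be1 ->]]]].
move=> [h [k' [a [Hh [/Kset_su2 [al' [be' [al_be1' ->]]] [[r [r_range ->]] eq_hka]]]]]].
have [lam lam2 Hlam] := Hset_colQ h Hh.
have [Q0 Q1] := colQ_su2 al' be'.
have [A0 A1] := colQ_mul_a r (su2 al' be').
have colQ_hka j : colQ (a_ t *m su2 al be) j = lam * colQ (su2 al' be' *m a_ r) j.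
  by rewrite eq_hka -mulmxA Hlam.
exists al, be, r, (lam * colQ (su2 al' be') i0); split => //; split => //.
- rewrite exprMn lam2 mul1r Q0.
  by have := sqnorm_ge0 al'; have := sqnorm_ge0 be'; nra.
- by move: (colQ_hka i0); rewrite colQ_a_mul A0 !mxE /= sqnormN sqnormJ => ->; ring.
- by move: (colQ_hka i1); rewrite colQ_a_mul A1 Q1 !mxE /= sqnormJ => ->; ring.
Qed.

Lemma K_T_1 (T t : R) : 0 <= t <= ln T -> K_T T t 1%:M.
Proof.
move=> t_range; split; first exact: Kset1.
exists 1%:M, 1%:M, (a_ t); split; first exact: Hset1.
split; first exact: Kset1.
split; first by exists t.
by rewrite mulmx1 !mul1mx.
Qed.

Lemma K_T_le_ln (T t : R) (k : M2) : K_T T t k -> t <= ln T.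
Proof.
move=> /K_T_form [al [be [r [s [_ [al_be1 /andP [r0 rT] s2 eq0 eq1]]]]]].
apply: le_trans rT; rewrite leNgt; apply/negP => rt.
have sinh_eq : expR t - expR (- t) = s * (expR r - expR (- r)).
  have -> : expR t - expR (- t) = expR t * (sqnorm al + sqnorm be)
    - expR (- t) * (sqnorm al + sqnorm be) by rewrite al_be1; ring.
  by apply/eqP; rewrite -subr_eq0; apply/eqP; lra.
have s1 : s <= 1 by nra.
have : expR r < expR t by rewrite ltr_expR.
have : expR (- t) < expR (- r) by rewrite ltr_expR ltrN2.
have : expR (- r) <= expR r by rewrite ler_expR; lra.
nra.
Qed.

Lemma K_T_sqnorm_small (T t : R) (k : M2) : 0 <= t -> K_T T t k ->
  exists al be, [/\ k = su2 al be, sqnorm al + sqnorm be = 1 & expR t * sqnorm be <= 2].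
Proof.
move=> t0 /K_T_form [al [be [r [s [-> [al_be1 /andP [r0 _] s2 _ eq1]]]]]].
exists al, be; split => //.
have : expR (- t) <= 1 by rewrite expR_le1; lra.
have : expR (- r) <= 1 by rewrite expR_le1; lra.
have := expR_gt0 (- r); have := sqnorm_ge0 al; have := sqnorm_ge0 be.
have : - 1 <= s by nra.
nra.
Qed.

Lemma inv_sqnorm1 (z : C) : sqnorm z = 1 -> z^-1 = z^*%C.
Proof.
move=> z1; have zJ : z * z^*%C = 1 by rewrite -sqnorm_mulJ z1.
have z_neq0 : z != 0 by apply: contra_eq_neq zJ => ->; rewrite mul0r eq_sym oner_neq0.
by apply: (mulfI z_neq0); rewrite mulfV.
Qed.

Lemma su2_polar (al be : C) : sqnorm al + sqnorm be = 1 -> sqnorm be < 1 ->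
  exists rho z, [/\ 0 <= rho, rho ^+ 2 + sqnorm be = 1, sqnorm z = 1 &
    su2 al be = su2 rho%:C (be * z) *m mx2 z 0 0 z^-1].
Proof.
case: al => a1 a2 /= al_be1 be1.
set rho := Num.sqrt (a1 ^+ 2 + a2 ^+ 2).
have rho2 : rho ^+ 2 = a1 ^+ 2 + a2 ^+ 2 by rewrite sqr_sqrtr //; nra.
have rho0 : 0 <= rho := sqrtr_ge0 _.
have rho_gt0 : 0 < rho by rewrite lt_neqAle rho0 andbT; apply/eqP => rho_eq0; nra.
set z := (a1 / rho) +i* (a2 / rho).
have z1 : sqnorm z = 1.
  by rewrite /= !expr_div_n -mulrDl -rho2 divff // expf_neq0 // gt_eqF.
have zJ : z * z^*%C = 1 by rewrite -sqnorm_mulJ z1.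
have rho_z : rho%:C * z = a1 +i* a2.
  by apply/eqP; rewrite eq_complex /=; apply/andP; split; apply/eqP; field; lra.
exists rho, z; split => //; first by lra.
rewrite /su2 mul_mx2 (inv_sqnorm1 z z1) !mulr0 !addr0 !add0r; congr mx2.
- by rewrite rho_z.
- by rewrite -mulrA zJ mulr1.
- by rewrite conjcM mulNr -mulrA (mulrC _ z) zJ mulr1.
- by rewrite -rho_z conjcM conjc_real.
Qed.

Lemma mxnorm_su2_real_sub1 (rho : R) (b : C) : 0 <= rho -> rho ^+ 2 + sqnorm b = 1 ->
  mxnorm (su2 rho%:C b - 1%:M) <= 4 * Num.sqrt (sqnorm b).
Proof.
move=> rho0 rho_b.
rewrite /mxnorm !sum_ord2 !mxE /= !subr0 !normc_sqnorm sqnormN sqnormJ.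
rewrite oppr0 expr0n addr0 sqrtr_sqr ler0_norm; last by have := sqnorm_ge0 b; nra.
set s := Num.sqrt (sqnorm b).
have s2 : s ^+ 2 = sqnorm b by rewrite sqr_sqrtr // sqnorm_ge0.
have s0 : 0 <= s := sqrtr_ge0 _.
nra.
Qed.

Lemma su2_K_eps_M (dist : M2 -> M2 -> R) (eps : R) : left_inv_metric dist -> 0 < eps ->
  exists2 d : R, 0 < d <= 1 & forall al be, sqnorm al + sqnorm be = 1 -> sqnorm be < d ->
    K_eps_M dist eps (su2 al be).
Proof.
move=> [_ [_ [_ [_ [_ [_ [near1 _]]]]]]] eps0.
have [del del0 Hdel] := near1 eps eps0.
set d := Num.min del 1.
have d0 : 0 < d by rewrite lt_min del0 ltr01.
have d1 : d <= 1 by rewrite ge_min lexx orbT.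
have d_del : d <= del by rewrite ge_min lexx.
exists (d ^+ 2 / 16); first by apply/andP; split; nra.
move=> al be al_be1 be_small.
have [|rho [z [rho0 rho_be z1 ->]]] := su2_polar al be al_be1; first by nra.
have bez1 : rho ^+ 2 + sqnorm (be * z) = 1 by rewrite sqnormM z1 mulr1.
have Kk : Kset (su2 rho%:C (be * z)) by apply: su2_Kset; rewrite sqnorm_real.
exists (su2 rho%:C (be * z)), (mx2 z 0 0 z^-1); split => //; last first.
  by split => //; exists z; split => //; apply/norm_eq1_sqnorm.
split => //; apply: Hdel; first by case: Kk.
apply: le_lt_trans (mxnorm_su2_real_sub1 _ _ rho0 bez1) _.
rewrite sqnormM z1 mulr1.
set s := Num.sqrt (sqnorm be).
have s2 : s ^+ 2 = sqnorm be by rewrite sqr_sqrtr // sqnorm_ge0.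
have s0 : 0 <= s := sqrtr_ge0 _.
nra.
Qed.

Lemma K_T_sub_K_eps_M (dist : M2 -> M2 -> R) (eps : R) : left_inv_metric dist -> 0 < eps ->
  exists2 T0 : R, 1 <= T0 &
    forall T t, T0 < t -> forall k, K_T T t k -> K_eps_M dist eps k.
Proof.
move=> Hd eps0; have [d /andP [d0 d1] HK] := su2_K_eps_M dist eps Hd eps0.
have two_d : 1 <= 2 / d by rewrite ler_pdivlMr // mul1r; lra.
have lnd0 := ln_ge0 two_d.
exists (1 + ln (2 / d)); first by lra.
move=> T t Tt k /(K_T_sqnorm_small T t k) [|al [be [-> al_be1 small]]]; first by lra.
apply: HK => //.
have : 2 / d < expR t.
  rewrite -[X in X < _](lnK (x := 2 / d)); last by rewrite posrE; lra.
  by rewrite ltr_expR; lra.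
rewrite ltr_pdivrMr // => et.
have := sqnorm_ge0 be; nra.
Qed.

End HKA_decomposition.

Theorem corollary4p3 (R : realType) (dist : 'M[R[i]]_2 -> 'M[R[i]]_2 -> R) :
  left_inv_metric dist ->
  (forall T t : R, 1 < T -> 0 <= t < ln T -> K_T T t 1%:M)
  /\ (forall T t : R, 1 < T -> ln T < t -> forall k, ~ K_T T t k)
  /\ (forall eps : R, 0 < eps -> exists2 T0 : R, 1 <= T0 &
        forall T t : R, 1 < T -> T0 < t ->
          forall k, K_T T t k -> K_eps_M dist eps k).
Proof.
move=> Hd; split; last split.
- by move=> T t _ /andP [t0 tT]; apply: K_T_1; rewrite t0 ltW.
- by move=> T t _ Tt k /K_T_le_ln; rewrite leNgt Tt.
- move=> eps eps0; have [T0 T0_ge1 HK] := K_T_sub_K_eps_M _ _ _ Hd eps0.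
  by exists T0 => // T t _; apply: HK.
Qed.
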